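(* Let $P\subset \mathbb{R}^d$ be a set of $n$ points and let $G$ be the greedy $3/2$-spanner of $P$. Then $G$ has tree-width at most $15\, \eta_d\, c_d\, 8^d \cdot n^{1-1/d}$.
   Context: The greedy $t$-spanner of $P$ is obtained by considering all pairs $\{u,v\}$ of points in order of nondecreasing Euclidean distance and inserting the edge $\{u,v\}$ (weighted by $|uv|$) whenever the current graph contains no path between $u$ and $v$ of length at most $t\cdot|uv|$. $\eta_d$ is the packing constant of $\mathbb{R}^d$: the smallest number such that for every $r\in(0,1]$, every set of points in the $d$-dimensional unit ball with pairwise distances at least $r$ has at most $\eta_d r^{-d}$ points. $c_d\leq 2^{\mathcal{O}(d)}$ is the constant (due to Le and Than) such that for every point set in $\mathbb{R}^d$ and every $t\in(1,3/2]$, every subgraph on $k$ vertices of the greedy $t$-spanner has a $(1-\frac{1}{\eta_d 2^{d+1}})$-balanced separator of size $c_d(t-1)^{1-2d}k^{1-1/d}$; here an $\alpha$-balanced separator of a graph $H$ is a vertex set $S$ such that $V(H)\setminus S$ splits into two parts with no edges between them, each of size at most $\alpha|V(H)|$. *)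

From HB Require Import structures.
From mathcomp Require Import all_boot all_order all_algebra.
From mathcomp Require Import boolp reals exp.
Set Implicit Arguments. Unset Strict Implicit. Unset Printing Implicit Defensive.
Import Order.TTheory GRing.Theory Num.Theory.
Local Open Scope ring_scope.

Section Defs.
Variable R : realType.

Definition edist (d : nat) (x y : 'rV[R]_d) : R :=
  Num.sqrt (\sum_(i < d) (x ord0 i - y ord0 i) ^+ 2).

Definition packing_bound (d : nat) (eta : R) : Prop :=
  forall (r : R), 0 < r -> r <= 1 ->
  forall (k : nat) (q : 'I_k -> 'rV[R]_d),
    (forall i, edist (q i) 0 <= 1) ->
    (forall i j, i != j -> r <= edist (q i) (q j)) ->
    k%:R <= eta * r ^- d.

Definition is_packing_constant (d : nat) (eta : R) : Prop :=
  packing_bound d eta /\ (forall eta', packing_bound d eta' -> eta <= eta').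

Section Greedy.
Variables (d n : nat) (p : 'I_n -> 'rV[R]_d).

Definition adj (E : seq ('I_n * 'I_n)) : rel 'I_n :=
  fun x y => ((x, y) \in E) || ((y, x) \in E).

Definition walk_length (u : 'I_n) (w : seq 'I_n) : R :=
  \sum_(l <- pairmap (fun a b => edist (p a) (p b)) u w) l.

Definition has_path_within (E : seq ('I_n * 'I_n)) (u v : 'I_n) (L : R) : Prop :=
  exists w : seq 'I_n, [/\ path (adj E) u w, last u w = v & walk_length u w <= L].

Definition all_pairs : seq ('I_n * 'I_n) :=
  [seq uv : 'I_n * 'I_n <- [seq (i, j) | i <- enum 'I_n, j <- enum 'I_n] | (nat_of_ord uv.1 < nat_of_ord uv.2)%N].

Definition greedy_order (s : seq ('I_n * 'I_n)) : Prop :=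
  perm_eq s all_pairs /\
  sorted (fun a b : 'I_n * 'I_n =>
            edist (p a.1) (p a.2) <= edist (p b.1) (p b.2)) s.

Definition greedy_spanner (t : R) (s : seq ('I_n * 'I_n)) : seq ('I_n * 'I_n) :=
  foldl (fun E uv =>
           if `[< has_path_within E uv.1 uv.2 (t * edist (p uv.1) (p uv.2)) >]
           then E else rcons E uv) [::] s.
End Greedy.

Definition balanced_separator (m : nat) (V : {set 'I_m}) (F : rel 'I_m)
    (alpha : R) (S : {set 'I_m}) : Prop :=
  S \subset V /\
  exists A B : {set 'I_m},
    [/\ A :|: B = V :\: S, [disjoint A & B],
        (forall x y, x \in A -> y \in B -> ~~ F x y),
        #|A|%:R <= alpha * #|V|%:R & #|B|%:R <= alpha * #|V|%:R].

Definition le_than_constant (d : nat) (eta c : R) : Prop :=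
  forall (m : nat) (q : 'I_m -> 'rV[R]_d), injective q ->
  forall (t : R), 1 < t -> t <= 3 / 2 ->
  forall s : seq ('I_m * 'I_m), greedy_order q s ->
  forall (V : {set 'I_m}) (F : rel 'I_m),
    (forall x y, F x y -> [/\ adj (greedy_spanner q t s) x y, x \in V & y \in V]) ->
    exists S : {set 'I_m},
      balanced_separator V F (1 - (eta * 2 ^+ d.+1)^-1) S /\
      #|S|%:R <= c * powR (t - 1) (1 - 2 * d%:R) * powR #|V|%:R (1 - d%:R^-1).

Definition is_tree (k : nat) (e : rel 'I_k) : Prop :=
  [/\ symmetric e, irreflexive e,
      (forall x y, connect e x y) &
      (forall c : seq 'I_k, uniq c -> (2 < size c)%N -> ~~ cycle e c)].

Definition tree_decomposition (n : nat) (G : rel 'I_n)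
    (k : nat) (e : rel 'I_k) (B : 'I_k -> {set 'I_n}) : Prop :=
  [/\ is_tree e,
      (forall x, exists i, x \in B i),
      (forall x y, G x y -> exists i, (x \in B i) && (y \in B i)) &
      (forall x i j, x \in B i -> x \in B j ->
         connect (fun a b => [&& e a b, x \in B a & x \in B b]) i j)].

Definition treewidth_le (n : nat) (G : rel 'I_n) (w : R) : Prop :=
  exists (k : nat) (e : rel 'I_k) (B : 'I_k -> {set 'I_n}),
    tree_decomposition G e B /\ (forall i, #|B i|%:R - 1 <= w).

End Defs.

From HB Require Import structures.
From mathcomp Require Import all_boot all_order all_algebra.
From mathcomp Require Import boolp reals exp.
From mathcomp Require Import zify ring lra.
Set Implicit Arguments. Unset Strict Implicit. Unset Printing Implicit Defensive.
Import Order.TTheory GRing.Theory Num.Theory.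
Local Open Scope ring_scope.

(* For d >= 2, the Le--Than separators
   S of size c' k^beta (c' = c 2^(2d-1), beta = 1 - 1/d) split any k vertices
   into parts of size at most alpha k, alpha = 1 - 1/(eta 2^(d+1)).  Recursing
   on the parts and adding S to all their bags yields bags of size at most
   K k^beta, where K = c'/(1 - alpha^beta) solves K = c' + K alpha^beta; and
   1 - alpha^beta >= (1 - alpha)/2 because beta >= 1/2, so K <= 2 eta c 8^d.
   For d = 1 the exponent beta vanishes, but a greedy edge never jumps over
   a point of the line: the spanner is a path, of tree-width 1, while the
   Le--Than property at a single point forces c' >= 1. *)

Lemma forall_ltn_add (Q : nat -> Prop) m1 m2 :
    (forall i, (i < m1)%N -> Q i) -> (forall j, (j < m2)%N -> Q (m1 + j)%N) ->
  forall i, (i < m1 + m2)%N -> Q i.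
Proof.
move=> Q1 Q2 i i_lt; case: (ltnP i m1) => [|m1_le]; first exact: Q1.
by rewrite -(subnKC m1_le); apply: Q2; lia.
Qed.

Definition splice (T : Type) k (f g : nat -> T) i := if (i < k)%N then f i else g (i - k)%N.

Lemma spliceL (T : Type) k (f g : nat -> T) i : (i < k)%N -> splice k f g i = f i.
Proof. by rewrite /splice => ->. Qed.

Lemma spliceR (T : Type) k (f g : nat -> T) j : splice k f g (k + j) = g j.
Proof. by rewrite /splice ltnNge leq_addr addKn. Qed.

Section ParentTree.
Variables (k : nat) (par : nat -> nat).
Hypothesis par_lt : forall i, (0 < i < k)%N -> (par i < i)%N.

Definition parent_rel : rel 'I_k :=
  fun a b => (a != b) && ((0 < a)%N && (par a == b) || (0 < b)%N && (par b == a)).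

Lemma parent_rel_sym : symmetric parent_rel.
Proof. by move=> a b; rewrite /parent_rel eq_sym orbC. Qed.

Lemma parent_rel_lt (a b : 'I_k) : parent_rel a b -> (a < b)%N -> par b = a.
Proof.
case/andP=> _ /orP[/andP[a_gt0 /eqP <-] | /andP[_ /eqP //]].
by rewrite ltnNge ltnW // par_lt // a_gt0 ltn_ord.
Qed.

Lemma connect_parent_rel (P : pred nat) (top : 'I_k) :
    (forall i, (i < k)%N -> P i -> i = top \/ (0 < i)%N /\ P (par i)) ->
  forall i : 'I_k, P i -> connect [rel a b | [&& parent_rel a b, P a & P b]] i top.
Proof.
move=> Ptop i; have [m] := ubnP (val i); elim: m i => // m IH i.
rewrite ltnS => im Pi.
case: (Ptop i (ltn_ord i) Pi) => [/val_inj -> // | [i_gt0 Ppi]].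
have pi_lt : (par i < i)%N by apply: par_lt; rewrite i_gt0 ltn_ord.
have pi_k : (par i < k)%N := ltn_trans pi_lt (ltn_ord i).
apply: (connect_trans (y := Ordinal pi_k)).
  apply: connect1; rewrite /= /parent_rel Pi Ppi i_gt0 eqxx !andbT /=.
  by rewrite -(inj_eq val_inj) /= neq_ltn pi_lt orbT.
exact: (IH (Ordinal pi_k)) (leq_trans pi_lt im) Ppi.
Qed.

Lemma parent_tree : (0 < k)%N -> is_tree parent_rel.
Proof.
move=> k0; split; first exact: parent_rel_sym.
- by move=> a; rewrite /parent_rel eqxx.
- have to_root (a : 'I_k) : connect parent_rel a (Ordinal k0).
    apply: (connect_sub (e := [rel x y | [&& parent_rel x y, predT x & predT y]])).
      by move=> x y /andP[xy _]; apply: connect1.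
    apply: (@connect_parent_rel predT (Ordinal k0)) => // i _ _.
    by case: (posnP i); [left | right].
  move=> a b; apply: connect_trans (to_root a) _.
  by rewrite (sym_connect_sym parent_rel_sym) to_root.
- move=> c c_uniq c_size; apply/negP => c_cycle.
  (* The largest node of a cycle would have both its cycle neighbours as parent. *)
  have [m mc mmax] : exists2 m, m \in c & forall y, y \in c -> (val y <= val m)%N.
    case: c c_size {c_uniq c_cycle} => // a c _.
    case: (@arg_maxnP _ a (mem (a :: c)) val) => [|m mc mmax]; first exact: mem_head.
    by exists m.
  have [i s' c_rot] := rot_to mc.
  move: c_cycle c_uniq (c_size); rewrite -(rot_cycle i) -(rot_uniq i) -(size_rot i) c_rot.
  case: s' c_rot => [|y [|a s']] c_rot //.
  rewrite /cycle rcons_path /= => /andP[/and3P[my _ _] zm] /and4P[m_notin y_notin _ _] _.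
  set z := last a s' in zm.
  have z_in : z \in a :: s' := mem_last a s'.
  have in_c u : u \in y :: a :: s' -> u \in c.
    by move=> u_in; rewrite -(mem_rot i) c_rot inE u_in orbT.
  have lt_m u : u \in y :: a :: s' -> (val u < val m)%N.
    move=> u_in; rewrite ltn_neqAle mmax ?in_c // andbT (inj_eq val_inj).
    by apply: contraNneq m_notin => <-.
  have /parent_rel_lt my' := lt_m y (mem_head _ _).
  have /parent_rel_lt zm' : (val z < val m)%N by rewrite lt_m // inE z_in orbT.
  have yz : y = z by apply/val_inj; rewrite /= -zm' // my' // parent_rel_sym.
  by move: y_notin; rewrite yz z_in.
Qed.
End ParentTree.

Section RootedDecomposition.
Variables (R : realType) (n : nat) (G : rel 'I_n).
Implicit Types (V S A B Z : {set 'I_n}) (w : R).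

(* A tree decomposition given as bags [bag i], [i < k], where bag [i > 0]
   hangs below bag [par i < i]; [rd_top] says that the bags containing [x]
   form a subtree, rooted at bag [top]. *)
Record is_rooted_decomp V w k (par : nat -> nat) (bag : nat -> {set 'I_n}) : Prop := {
  rd_root : (0 < k)%N;
  rd_par_lt : forall i, (0 < i < k)%N -> (par i < i)%N;
  rd_sub : forall i, (i < k)%N -> bag i \subset V;
  rd_cover : forall x, x \in V -> exists2 i, (i < k)%N & x \in bag i;
  rd_edge : forall x y, x \in V -> y \in V -> G x y ->
    exists2 i, (i < k)%N & (x \in bag i) && (y \in bag i);
  rd_top : forall x, exists2 top, (top < k)%N & forall i, (i < k)%N -> x \in bag i ->
    i = top \/ (0 < i)%N /\ x \in bag (par i);
  rd_size : forall i, (i < k)%N -> #|bag i|%:R <= w }.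

Definition rooted_decomp V w := exists k par bag, is_rooted_decomp V w k par bag.

Lemma treewidth_of_rooted_decomp w : rooted_decomp setT w -> treewidth_le G (w - 1).
Proof.
case=> k [par [bag dec]].
exists k, (parent_rel par), (fun i : 'I_k => bag i); split; last first.
  by move=> i; rewrite lerD2r (rd_size dec).
split; first exact: parent_tree (rd_par_lt dec) (rd_root dec).
- by move=> x; have [i ik xi] := rd_cover dec (in_setT x); exists (Ordinal ik).
- move=> x y xy; have [i ik xyi] := rd_edge dec (in_setT x) (in_setT y) xy.
  by exists (Ordinal ik).
- move=> x i j xi xj; have [top top_k top_x] := rd_top dec x.
  have to_top := connect_parent_rel (rd_par_lt dec) (top := Ordinal top_k) top_x.
  apply: connect_trans (to_top _ xi) _; rewrite (sym_connect_sym _) ?to_top //.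
  by move=> a b /=; rewrite parent_rel_sym [(x \in bag a) && _]andbC.
Qed.

Lemma treewidth_leW w w' : w <= w' -> treewidth_le G w -> treewidth_le G w'.
Proof.
move=> le_ww' [k [e [B [decomp B_size]]]]; exists k, e, B; split => // i.
exact: le_trans (B_size i) le_ww'.
Qed.

Lemma rooted_decompW V w w' : w <= w' -> rooted_decomp V w -> rooted_decomp V w'.
Proof.
move=> le_ww' [k [par [bag [? ? ? ? ? ? bag_size]]]].
by exists k, par, bag; split => // i /bag_size/le_trans; apply.
Qed.

Lemma rooted_decomp_bag V w : #|V|%:R <= w -> is_rooted_decomp V w 1 id (fun=> V).
Proof.
move=> V_le; split => //; first by case=> [|[]].
- by move=> x xV; exists 0%N.
- by move=> x y xV yV _; exists 0%N; rewrite ?xV.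
- by move=> x; exists 0%N => // [[|[]]] // _ _; left.
Qed.

Lemma rooted_decomp_addU S V w :
  rooted_decomp V w -> rooted_decomp (S :|: V) (#|S|%:R + w).
Proof.
case=> k [par [bag dec]]; exists k, par, (fun i => S :|: bag i).
have cover x : x \in S :|: V -> exists2 i, (i < k)%N & x \in S :|: bag i.
  case/setUP => [xS | /(rd_cover dec)[i ik xi]]; last by exists i; rewrite // inE xi orbT.
  by exists 0%N; rewrite ?(rd_root dec) // inE xS.
split => //; [exact: rd_root dec | exact: rd_par_lt dec | | | |].
- by move=> i ik; apply: setUS (rd_sub dec ik).
- move=> x y /cover[i ik xi] /cover[j jk yj] xy.
  have [xS | xNS] := boolP (x \in S); first by exists j; rewrite // inE xS.
  have [yS | yNS] := boolP (y \in S); first by exists i; rewrite // xi inE yS.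
  move: xi yj; rewrite !inE (negbTE xNS) (negbTE yNS) /= => xi yj.
  have [l lk /andP[xl yl]] :=
    rd_edge dec (subsetP (rd_sub dec ik) x xi) (subsetP (rd_sub dec jk) y yj) xy.
  by exists l; rewrite // !inE xl yl !orbT.
- move=> x; have [xS | xNS] := boolP (x \in S).
    exists 0%N => [|i _ _]; first exact: rd_root dec.
    by case: (posnP i) => [-> | i_gt0]; [left | right; rewrite inE xS].
  have [top top_k top_x] := rd_top dec x; exists top => // i ik.
  by rewrite !inE (negbTE xNS) => /(top_x i ik).
- move=> i ik; apply: le_trans (lerD (lexx _) (rd_size dec ik)).
  by rewrite -natrD ler_nat leq_card_setU.
Qed.

Section Glue.
Variables (VA VB : {set 'I_n}) (w : R) (kA kB r : nat) (pA pB : nat -> nat).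
Variables (bA bB : nat -> {set 'I_n}).
Hypotheses (decA : is_rooted_decomp VA w kA pA bA) (decB : is_rooted_decomp VB w kB pB bB).
Hypothesis r_lt : (r < kA)%N.
Hypothesis edges_inside : forall x y, x \in VA :|: VB -> y \in VA :|: VB -> G x y ->
  (x \in VA) && (y \in VA) || (x \in VB) && (y \in VB).
Hypothesis shared : forall x, x \in VA -> x \in VB ->
  x \in bA r /\ forall j, (j < kB)%N -> x \in bB j -> j = 0%N.

Let par := splice kA pA (fun j => if j == 0%N then r else (kA + pB j)%N).
Let bag := splice kA bA bB.

Let glue_par_lt i : (0 < i < kA + kB)%N -> (par i < i)%N.
Proof.
case/andP=> i_gt0 ik; move: i ik i_gt0; apply: forall_ltn_add => [i ik i_gt0 | j jk _].
  by rewrite /par spliceL // (rd_par_lt decA) // i_gt0.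
rewrite /par spliceR; case: (posnP j) => [-> | j_gt0]; first by rewrite addn0.
by rewrite ltn_add2l (rd_par_lt decB) // j_gt0.
Qed.

Let glue_top x : exists2 top, (top < kA + kB)%N & forall i, (i < kA + kB)%N ->
  x \in bag i -> i = top \/ (0 < i)%N /\ x \in bag (par i).
Proof.
have [xA | xNA] := boolP (x \in VA).
  have [top top_k top_x] := rd_top decA x; exists top; first exact: ltn_addr.
  apply: forall_ltn_add => [i ik | j jk].
    rewrite /bag spliceL // => /(top_x i ik)[-> | [i_gt0 x_par]]; [left | right] => //.
    by rewrite /par spliceL // spliceL // (ltn_trans _ ik) // (rd_par_lt decA) // i_gt0.
  rewrite /bag spliceR => xj; have [x_r j0] := shared xA (subsetP (rd_sub decB jk) x xj).
  by right; rewrite (j0 _ jk xj) /par spliceR eqxx addn0 spliceL ?(rd_root decA).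
have [top top_k top_x] := rd_top decB x; exists (kA + top)%N; first by rewrite ltn_add2l.
apply: forall_ltn_add => [i ik | j jk].
  by rewrite /bag spliceL // => /(subsetP (rd_sub decA ik)); rewrite (negbTE xNA).
rewrite /bag spliceR => /(top_x j jk)[-> | [j_gt0 x_par]]; [left | right] => //.
by rewrite /par spliceR gtn_eqF // spliceR addn_gt0 j_gt0 orbT.
Qed.

Lemma is_rooted_decomp_glue : is_rooted_decomp (VA :|: VB) w (kA + kB) par bag.
Proof.
split; [by rewrite addn_gt0 (rd_root decA) | exact: glue_par_lt | | | | exact: glue_top |].
- apply: forall_ltn_add => [i ik | j jk]; rewrite /bag ?spliceR ?spliceL //.
    exact: subset_trans (rd_sub decA ik) (subsetUl _ _).
  exact: subset_trans (rd_sub decB jk) (subsetUr _ _).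
- move=> x /setUP[/(rd_cover decA)[i ik xi] | /(rd_cover decB)[j jk xj]].
    by exists i; rewrite ?ltn_addr // /bag spliceL.
  by exists (kA + j)%N; rewrite ?ltn_add2l // /bag spliceR.
- move=> x y xAB yAB xy; case/orP: (edges_inside xAB yAB xy) => /andP[xV yV].
    have [i ik xyi] := rd_edge decA xV yV xy.
    by exists i; rewrite ?ltn_addr // /bag spliceL.
  have [j jk xyj] := rd_edge decB xV yV xy.
  by exists (kA + j)%N; rewrite ?ltn_add2l // /bag spliceR.
- apply: forall_ltn_add => [i ik | j jk]; rewrite /bag ?spliceR ?spliceL //.
    exact: (rd_size decA ik).
  exact: (rd_size decB jk).
Qed.

End Glue.

Lemma rooted_decomp_disjointU A B w :
    symmetric G -> [disjoint A & B] -> (forall x y, x \in A -> y \in B -> ~~ G x y) ->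
  rooted_decomp A w -> rooted_decomp B w -> rooted_decomp (A :|: B) w.
Proof.
move=> G_sym AB_dis AB_sep [kA [pA [bA decA]]] [kB [pB [bB decB]]].
do 3 eexists; apply: (is_rooted_decomp_glue decA decB (rd_root decA)).
- move=> x y /setUP[xA | xB] /setUP[yA | yB] xy; rewrite ?xA ?yA ?xB ?yB ?orbT //.
    by move: (AB_sep x y xA yB); rewrite xy.
  by move: (AB_sep y x yA xB); rewrite G_sym xy.
- by move=> x xA; rewrite (disjointFr AB_dis xA).
Qed.

Lemma rooted_decomp_add_leaf V m w :
    symmetric G -> m \in V -> (#|[set y in V :\ m | G m y]| <= 1)%N -> 2 <= w ->
  rooted_decomp (V :\ m) w -> rooted_decomp V w.
Proof.
set N := [set y in V :\ m | G m y] => G_sym mV N_le1 w_ge2 [k [par [bag dec]]].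
have N_sub : N \subset V :\ m by apply/subsetP => y; rewrite inE => /andP[].
have [r rk N_r] : exists2 r, (r < k)%N & N \subset bag r.
  have [-> | [y yN]] := set_0Vmem N; first by exists 0%N; rewrite ?sub0set ?(rd_root dec).
  have [i ik yi] := rd_cover dec (subsetP N_sub y yN).
  by exists i => //; apply/subsetP => z zN; rewrite (card_le1_eqP N_le1 y z yN zN).
have leaf_bag : is_rooted_decomp (m |: N) w 1 id (fun=> m |: N).
  apply: rooted_decomp_bag; apply: le_trans w_ge2; rewrite (ler_nat _ _ 2).
  by rewrite (leq_trans (leq_card_setU _ _)) // cards1 ltnS.
have m_nbr y : y \in V -> G m y -> y \in m |: N.
  by move=> yV my; rewrite !inE yV my andbT; case: eqP.
have V_eq : (V :\ m) :|: (m |: N) = V by rewrite setUCA (setUidPl N_sub) setD1K.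
rewrite -V_eq; do 3 eexists; apply: (is_rooted_decomp_glue dec leaf_bag rk).
- rewrite V_eq => x y; have [-> | xm] := eqVneq x m => xV yV xy.
    by rewrite setU11 m_nbr ?orbT.
  have [ym | ym] := eqVneq y m; last by rewrite !in_setD1 xm ym xV yV.
  by rewrite ym setU11 m_nbr ?orbT // G_sym -ym.
- move=> x; rewrite in_setD1 => /andP[xm _] /setU1P[/eqP | xN].
    by rewrite (negbTE xm).
  by split=> [|[]] //; apply: (subsetP N_r).
Qed.

Lemma rooted_decomp_of_leaves w :
    symmetric G -> 2 <= w ->
    (forall V, V != set0 -> exists2 m, m \in V & (#|[set y in V :\ m | G m y]| <= 1)%N) ->
  forall V, rooted_decomp V w.
Proof.
move=> G_sym w_ge2 leaf V; have [N] := ubnP #|V|; elim: N V => // N IH V.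
rewrite ltnS => V_le; have [-> | V0] := eqVneq V set0.
  exists 1%N, id, (fun=> set0); apply: rooted_decomp_bag.
  by rewrite cards0 (le_trans _ w_ge2).
have [m mV m_leaf] := leaf V V0.
apply: (rooted_decomp_add_leaf G_sym mV m_leaf w_ge2 (IH _ _)).
by rewrite (cardsD1 m V) mV in V_le.
Qed.

Definition induced V : rel 'I_n := fun x y => [&& G x y, x \in V & y \in V].

Lemma rooted_decomp_of_separators (alpha : R) (W : nat -> R) :
    symmetric G -> alpha < 1 -> 0 <= W 0%N ->
    (forall V, V != set0 -> exists S, balanced_separator V (induced V) alpha S /\
       forall m, m%:R <= alpha * #|V|%:R -> #|S|%:R + W m <= W #|V|) ->
  forall V, rooted_decomp V (W #|V|).
Proof.
move=> G_sym alpha_lt1 W0 sep V; have [N] := ubnP #|V|; elim: N V => // N IH V.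
rewrite ltnS => V_le; have [-> | V0] := eqVneq V set0.
  by exists 1%N, id, (fun=> set0); apply: rooted_decomp_bag; rewrite cards0.
have [S [[SV [A [B [AB_eq AB_dis AB_sep A_le B_le]]]] S_cost]] := sep V V0.
have V_gt0 : 0 < #|V|%:R :> R by rewrite ltr0n card_gt0.
have part Z : #|Z|%:R <= alpha * #|V|%:R -> rooted_decomp Z (W #|V| - #|S|%:R).
  move=> Z_le; apply: rooted_decompW (IH Z _); first by rewrite lerBrDl S_cost.
  apply: leq_trans V_le; rewrite -(ltr_nat R); apply: le_lt_trans Z_le _.
  by rewrite gtr_pMl.
have inV x : x \in A :|: B -> x \in V by rewrite AB_eq => /setDP[].
have AB_decomp : rooted_decomp (A :|: B) (W #|V| - #|S|%:R).
  apply: rooted_decomp_disjointU (part A A_le) (part B B_le) => // x y xA yB.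
  by have := AB_sep x y xA yB; rewrite /induced !inV ?inE ?xA ?yB ?orbT // !andbT.
have SAB_eq : S :|: (A :|: B) = V by rewrite AB_eq -{2}(setID V S) (setIidPr SV).
by have := rooted_decomp_addU S AB_decomp; rewrite SAB_eq addrC subrK.
Qed.

Lemma treewidth_le_of_separators (alpha beta C : R) :
    symmetric G -> 0 <= alpha < 1 -> 0 < beta -> 0 <= C ->
    (forall V, V != set0 -> exists S,
       balanced_separator V (induced V) alpha S /\ #|S|%:R <= C * powR #|V|%:R beta) ->
  treewidth_le G (C / (1 - powR alpha beta) * powR n%:R beta - 1).
Proof.
move=> G_sym /andP[alpha_ge0 alpha_lt1] beta_gt0 C_ge0 sep.
set K := C / (1 - powR alpha beta).
(* [W m = K m^beta] pays for a separator of a set of size [m] and for the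
   recursion on its parts, of size at most [alpha m]. *)
have Pa_lt1 : powR alpha beta < 1.
  by have := gt0_ltr_powR beta_gt0 alpha_ge0 ler01 alpha_lt1; rewrite powR1.
have K_ge0 : 0 <= K by rewrite divr_ge0 // subr_ge0 ltW.
have K_eq : C + K * powR alpha beta = K.
  by rewrite /K; field; rewrite subr_eq0 eq_sym lt_eqF.
have := treewidth_of_rooted_decomp (rooted_decomp_of_separators
  (W := fun m => K * powR m%:R beta) G_sym alpha_lt1 _ _ setT).
rewrite cardsT card_ord; apply; first by rewrite powR0 ?mulr0 // gt_eqF.
move=> V V0; have [S [S_sep S_le]] := sep V V0; exists S; split => // m m_le.
rewrite -[in leRHS]K_eq mulrDl -mulrA -powRM ?ler0n //.
apply: lerD S_le (ler_wpM2l K_ge0 (ge0_ler_powR (ltW beta_gt0) _ _ m_le)).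
all: by rewrite nnegrE ?mulr_ge0.
Qed.

End RootedDecomposition.

Section GreedySpanner.
Variables (R : realType) (d n : nat) (p : 'I_n -> 'rV[R]_d).
Implicit Types (t L : R) (E s : seq ('I_n * 'I_n)).

Local Notation dist a b := (edist (p a) (p b)).

Lemma adj_sym E : symmetric (adj E).
Proof. by move=> a b; rewrite /adj orbC. Qed.

Lemma edistC (x y : 'rV[R]_d) : edist x y = edist y x.
Proof.
by rewrite /edist; congr Num.sqrt; apply: eq_bigr => i _; rewrite -opprB sqrrN.
Qed.

Lemma edist_ge0 (x y : 'rV[R]_d) : 0 <= edist x y.
Proof. exact: sqrtr_ge0. Qed.

Lemma has_path_within_sub E E' a b L :
  {subset E <= E'} -> has_path_within p E a b L -> has_path_within p E' a b L.
Proof.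
move=> sub [w [w_path w_last w_len]]; exists w; split => //.
by apply: sub_path w_path => x y /orP[/sub xy | /sub yx]; apply/orP; [left | right].
Qed.

Lemma has_path_withinW E a b L L' :
  L <= L' -> has_path_within p E a b L -> has_path_within p E a b L'.
Proof. by move=> le_LL' [w [? ? w_len]]; exists w; split => //; apply: le_trans le_LL'. Qed.

Lemma has_path_within_refl E a L : 0 <= L -> has_path_within p E a a L.
Proof. by move=> L_ge0; exists [::]; rewrite /walk_length big_nil. Qed.

Lemma has_path_within_edge E a b : adj E a b -> has_path_within p E a b (dist a b).
Proof. by move=> ab; exists [:: b]; rewrite /walk_length /= ab big_cons big_nil addr0. Qed.

Lemma has_path_within_trans E a b c L1 L2 :
    has_path_within p E a b L1 -> has_path_within p E b c L2 ->
  has_path_within p E a c (L1 + L2).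
Proof.
move=> [w1 [w1_path <- w1_len]] [w2 [w2_path <- w2_len]].
exists (w1 ++ w2); rewrite cat_path w1_path w2_path last_cat; split => //.
by rewrite /walk_length pairmap_cat big_cat lerD.
Qed.

Lemma has_path_within_sym E a b L :
  has_path_within p E a b L -> has_path_within p E b a L.
Proof.
move=> [w [w_path <- w_len]]; apply: has_path_withinW w_len _.
elim: w a w_path => [|x w IH] a /=.
  by move=> _; apply: has_path_within_refl; rewrite /walk_length big_nil.
case/andP=> ax /IH x_w; rewrite /walk_length /= big_cons addrC.
apply: has_path_within_trans x_w _; rewrite edistC.
by apply: has_path_within_edge; rewrite adj_sym.
Qed.

Definition greedy_step t E (uv : 'I_n * 'I_n) :=
  if `[< has_path_within p E uv.1 uv.2 (t * dist uv.1 uv.2) >] then E else rcons E uv.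

Lemma greedy_spannerE t s : greedy_spanner p t s = foldl (greedy_step t) [::] s.
Proof. by []. Qed.

Lemma foldl_greedy_step_sub t E s : {subset E <= foldl (greedy_step t) E s}.
Proof.
move=> e; elim: s E => [|uv s IH] E eE //=; apply: IH.
by rewrite /greedy_step; case: ifP => // _; rewrite mem_rcons inE eE orbT.
Qed.

Lemma mem_foldl_greedy_step t E s e :
  e \in foldl (greedy_step t) E s -> (e \in E) || (e \in s).
Proof.
elim: s E => [|uv s IH] E /=; first by rewrite orbF.
case/IH/orP => [|e_s]; last by rewrite inE e_s !orbT.
rewrite /greedy_step inE; case: ifP => [_ -> // | _].
by rewrite mem_rcons inE => /predU1P[-> | ->]; rewrite ?eqxx ?orbT.
Qed.

Lemma foldl_greedy_step_spans t E s e : 1 <= t -> e \in s ->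
  has_path_within p (foldl (greedy_step t) E s) e.1 e.2 (t * dist e.1 e.2).
Proof.
move=> t_ge1; elim: s E => // uv s IH E; rewrite inE => /predU1P[-> | /IH]; last exact.
apply: (has_path_within_sub (@foldl_greedy_step_sub t (greedy_step t E uv) s)).
rewrite /greedy_step; case: asboolP => // _.
apply: has_path_withinW (has_path_within_edge _); first by rewrite ler_peMl ?edist_ge0.
by rewrite /adj mem_rcons -surjective_pairing mem_head.
Qed.

Lemma mem_all_pairs a b : ((a, b) \in all_pairs n) = (a < b)%N.
Proof.
rewrite /all_pairs mem_filter /=; case: ltnP => //= _.
by apply: (allpairs_f (fun i j => (i, j))); rewrite mem_enum.
Qed.

Lemma all_pairs_uniq : uniq (all_pairs n).
Proof.
rewrite filter_uniq // allpairs_uniq ?enum_uniq //.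
by move=> [a b] [a' b'] _ _ /= [-> ->].
Qed.

Lemma greedy_prefix_spans_shorter t s1 uv s2 a b :
    1 <= t -> greedy_order p (s1 ++ uv :: s2) -> dist a b < dist uv.1 uv.2 ->
  has_path_within p (greedy_spanner p t s1) a b (t * dist a b).
Proof.
move=> t_ge1 [s_perm s_sorted] ab_lt.
have in_prefix e : e \in s1 ++ uv :: s2 -> dist e.1 e.2 < dist uv.1 uv.2 -> e \in s1.
  rewrite mem_cat inE => /or3P[// | /eqP-> | e_s2]; first by rewrite ltxx.
  have le_trans' : transitive (fun e e' : 'I_n * 'I_n => dist e.1 e.2 <= dist e'.1 e'.2).
    by move=> ? ? ?; apply: le_trans.
  have /(order_path_min le_trans')/allP/(_ e e_s2) := (cat_sorted2 s_sorted).2.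
  by rewrite leNgt => /negbTE->.
have pair_spans e : e \in all_pairs n -> dist e.1 e.2 < dist uv.1 uv.2 ->
    has_path_within p (greedy_spanner p t s1) e.1 e.2 (t * dist e.1 e.2).
  move=> e_pairs e_lt; apply: foldl_greedy_step_spans t_ge1 _.
  by apply: in_prefix e_lt; rewrite (perm_mem s_perm).
case: (ltngtP a b) => [lt_ab | lt_ba | /val_inj ->].
- by apply: (pair_spans (a, b)); rewrite ?mem_all_pairs.
- rewrite edistC; apply: has_path_within_sym.
  by apply: (pair_spans (b, a)); rewrite ?mem_all_pairs //= edistC.
- by apply: has_path_within_refl; rewrite mulr_ge0 ?edist_ge0 // (le_trans ler01).
Qed.

Lemma greedy_edge_no_detour t s u v z :
    1 <= t -> greedy_order p s -> (u, v) \in greedy_spanner p t s ->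
    dist u z < dist u v -> dist z v < dist u v -> dist u z + dist z v <= dist u v ->
  False.
Proof.
move=> t_ge1 s_greedy uv_E uz_lt zv_lt detour.
have s_uniq : uniq s by rewrite (perm_uniq s_greedy.1) all_pairs_uniq.
have uv_s : (u, v) \in s by move: uv_E => /mem_foldl_greedy_step.
move: s_greedy s_uniq uv_E; case/splitPr: uv_s => s1 s2 s_greedy.
rewrite cat_uniq /= => /and3P[_ /norP[uv_s1 _] /andP[uv_s2 _]].
have E1_uv : has_path_within p (greedy_spanner p t s1) u v (t * dist u v).
  apply: has_path_withinW (has_path_within_trans
    (greedy_prefix_spans_shorter t_ge1 s_greedy uz_lt)
    (greedy_prefix_spans_shorter t_ge1 s_greedy zv_lt)).
  by rewrite -mulrDr ler_wpM2l // (le_trans ler01).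
have skip_uv : greedy_step t (greedy_spanner p t s1) (u, v) = greedy_spanner p t s1.
  by rewrite /greedy_step asboolT.
rewrite greedy_spannerE foldl_cat /= -greedy_spannerE skip_uv.
case/mem_foldl_greedy_step/orP => [/mem_foldl_greedy_step | ].
  by rewrite (negbTE uv_s1).
by rewrite (negbTE uv_s2).
Qed.

End GreedySpanner.

Lemma edist_row1 (R : realType) (x y : 'rV[R]_1) :
  edist x y = `|x ord0 ord0 - y ord0 ord0|.
Proof. by rewrite /edist big_ord1 sqrtr_sqr. Qed.

Section GreedyLine.
Variables (R : realType) (n : nat) (p : 'I_n -> 'rV[R]_1) (t : R) (s : seq ('I_n * 'I_n)).
Hypotheses (t_ge1 : 1 <= t) (s_greedy : greedy_order p s) (p_inj : injective p).

Let G := adj (greedy_spanner p t s).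
Let coord i := p i ord0 ord0.

Lemma greedy_line_no_jump x y z : G x y -> coord x < coord z < coord y -> False.
Proof.
move=> xGy /andP[xz zy].
have dist_lt a b : coord a < coord b ->
    edist (p a) (p b) = coord b - coord a /\ edist (p b) (p a) = coord b - coord a.
  move=> ab; have norm_ab : `|coord b - coord a| = coord b - coord a.
    by rewrite gtr0_norm // subr_gt0.
  by rewrite !edist_row1 distrC norm_ab.
have [xz1 xz2] := dist_lt _ _ xz; have [zy1 zy2] := dist_lt _ _ zy.
have [xy1 xy2] := dist_lt _ _ (lt_trans xz zy).
case/orP: xGy => [xy | yx].
- by apply: (greedy_edge_no_detour (z := z) t_ge1 s_greedy xy); rewrite ?xz1 ?zy1 ?xy1; lra.
- by apply: (greedy_edge_no_detour (z := z) t_ge1 s_greedy yx); rewrite ?xz2 ?zy2 ?xy2; lra.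
Qed.

Lemma greedy_line_leaf V :
  V != set0 -> exists2 m, m \in V & (#|[set y in V :\ m | G m y]| <= 1)%N.
Proof.
case/set0Pn => v vV; case: (arg_maxP coord vV) => m mV m_max; exists m => //.
set N := [set y in V :\ m | G m y].
have coord_inj : injective coord.
  by move=> a b ab; apply: p_inj; apply/rowP => j; rewrite (ord1 j).
have nbr_max y y' : y \in N -> y' \in V :\ m -> coord y' <= coord y.
  rewrite !inE => /andP[/andP[ym yV] mGy] /andP[y'm y'V]; rewrite leNgt; apply/negP => yy'.
  have y'_lt : coord y' < coord m.
    by rewrite lt_neqAle (inj_eq coord_inj) y'm; apply: m_max.
  by apply: (greedy_line_no_jump (x := y) (y := m) (z := y')); rewrite ?yy' ?y'_lt // /G adj_sym.
apply/card_le1_eqP => y z yN zN; apply: coord_inj; apply/eqP; rewrite eq_le.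
have N_sub : {subset N <= V :\ m} by move=> u; rewrite inE => /andP[].
by rewrite !nbr_max ?N_sub.
Qed.

Lemma greedy_line_treewidth : treewidth_le G (1 : R).
Proof.
have := treewidth_of_rooted_decomp
  (@rooted_decomp_of_leaves R n G 2 (adj_sym _) (lexx 2) greedy_line_leaf setT).
by have -> : 2 - 1 = 1 :> R by lra.
Qed.

End GreedyLine.

Lemma packing_bound_ge1 (R : realType) d (eta : R) : packing_bound d eta -> 1 <= eta.
Proof.
move=> pack; have := pack 1 ltr01 (lexx 1) 1%N (fun=> 0).
rewrite expr1n invr1 mulr1; apply => [i | i j]; last by rewrite !ord1 eqxx.
by rewrite /edist big1 ?sqrtr0 // => j _; rewrite subrr expr0n.
Qed.

Lemma balanced_separator1 (R : realType) m (x : 'I_m) (F : rel 'I_m) (alpha : R) S :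
  alpha < 1 -> balanced_separator [set x] F alpha S -> x \in S.
Proof.
move=> alpha_lt1 [_ [A [B [AB_eq _ _]]]]; rewrite cards1 mulr1 => A_le B_le.
have too_big (Z : {set 'I_m}) : x \in Z -> #|Z|%:R <= alpha -> False.
  move=> xZ Z_le; have : 1 <= #|Z|%:R :> R by rewrite ler1n card_gt0; apply/set0Pn; exists x.
  lra.
apply/contraT => xNS; have : x \in A :|: B by rewrite AB_eq !inE xNS eqxx.
by case/setUP => [/too_big/(_ A_le) | /too_big/(_ B_le)].
Qed.

Lemma all_pairs1 : all_pairs 1 = [::].
Proof.
case E: (all_pairs 1) => [// | [a b] l].
by have := mem_all_pairs a b; rewrite E mem_head !ord1.
Qed.

Lemma le_than_constant_ge1 (R : realType) d (eta c t : R) :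
    0 < eta -> le_than_constant d eta c -> 1 < t -> t <= 3 / 2 ->
  1 <= c * powR (t - 1) (1 - 2 * d%:R).
Proof.
move=> eta_gt0 c_LT t_gt1 t_le.
pose q := fun _ : 'I_1 => 0 : 'rV[R]_d.
have q_inj : injective q by move=> i j _; rewrite !ord1.
have q_greedy : greedy_order q [::] by rewrite /greedy_order all_pairs1.
have no_edges (x y : 'I_1) : false -> [/\ adj (greedy_spanner q t [::]) x y,
  x \in [set ord0] & y \in [set ord0]] by [].
have [S [S_sep]] := c_LT 1%N q q_inj t t_gt1 t_le [::] q_greedy _ _ no_edges.
rewrite cards1 powR1 mulr1; apply: le_trans; rewrite ler1n card_gt0.
apply/set0Pn; exists ord0; apply: balanced_separator1 S_sep.
have : 0 < (eta * 2 ^+ d.+1)^-1 by rewrite invr_gt0 mulr_gt0 ?exprn_gt0.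
lra.
Qed.

Lemma powR_one_sub_le (R : realType) (x beta : R) :
  0 <= x < 1 -> 2^-1 <= beta -> powR (1 - x) beta <= 1 - x / 2.
Proof.
move=> /andP[x_ge0 x_lt1] beta_ge.
apply: le_trans (ger_powR _ beta_ge) _; first by apply/andP; split; lra.
rewrite powR12_sqrt; last by lra.
have half_ge0 : 0 <= 1 - x / 2 by lra.
by rewrite -(ger0_norm half_ge0) -sqrtr_sqr ler_sqrt; nra.
Qed.

Lemma powR_half_mul_exp2 (R : realType) (d : nat) :
  powR (3 / 2 - 1) (1 - 2 * d%:R) * 2 ^+ d.+1 = 8 ^+ d :> R.
Proof.
have -> : 3 / 2 - 1 = 2^-1 :> R by field.
have -> : 1 - 2 * d%:R = 1 + - (2 * d)%:R :> R by rewrite natrM.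
have inv2_ge0 : 0 <= 2^-1 :> R by rewrite invr_ge0 ler0n.
rewrite powRD ?invr_eq0 ?pnatr_eq0 ?implybT // powRr1 // powR_invn // exprVn invrK.
rewrite -mulrA -exprD (_ : (2 * d + d.+1 = (3 * d).+1)%N); last by lia.
by rewrite exprS mulKf ?pnatr_eq0 // exprM (_ : 2 ^+ 3 = 8 :> R) //; rewrite !exprS expr0; lra.
Qed.

Lemma le_than_separators (R : realType) d n (p : 'I_n -> 'rV[R]_d) (eta c t : R) s :
    le_than_constant d eta c -> injective p -> 1 < t -> t <= 3 / 2 -> greedy_order p s ->
  forall V : {set 'I_n}, exists S,
    balanced_separator V (induced (adj (greedy_spanner p t s)) V)
      (1 - (eta * 2 ^+ d.+1)^-1) S /\
    #|S|%:R <= c * powR (t - 1) (1 - 2 * d%:R) * powR #|V|%:R (1 - d%:R^-1).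
Proof.
move=> c_LT p_inj t_gt1 t_le s_greedy V.
by apply: (c_LT n p p_inj t t_gt1 t_le s s_greedy V) => a b /and3P[].
Qed.

Lemma div_one_sub_powR_le (R : realType) (x beta C : R) :
  0 < x < 1 -> 2^-1 <= beta -> 0 <= C -> C / (1 - powR (1 - x) beta) <= 2 * C / x.
Proof.
move=> /andP[x_gt0 x_lt1] beta_ge C_ge0.
have : powR (1 - x) beta <= 1 - x / 2 by apply: powR_one_sub_le => //; rewrite x_lt1 ltW.
have -> : 2 * C / x = C * (x / 2)^-1 by field; rewrite gt_eqF.
by move=> P_le; rewrite ler_wpM2l // lef_pV2 ?posrE; lra.
Qed.

Lemma greedy_spanner_treewidth_le (R : realType) d n (p : 'I_n -> 'rV[R]_d) (eta c : R) s :
    (1 < d)%N -> injective p -> 1 <= eta -> le_than_constant d eta c -> greedy_order p s ->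
  treewidth_le (adj (greedy_spanner p (3 / 2) s))
    (2 * eta * (c * 8 ^+ d) * powR n%:R (1 - d%:R^-1)).
Proof.
move=> d_gt1 p_inj eta_ge1 c_LT s_greedy.
have t_gt1 : 1 < 3 / 2 :> R by lra.
set c' := c * powR (3 / 2 - 1) (1 - 2 * d%:R).
have c'_ge0 : 0 <= c'.
  by apply: le_trans (le_than_constant_ge1 _ c_LT t_gt1 (lexx _)); lra.
have pow2_ge2 : 2 <= 2 ^+ d.+1 :> R.
  have : 1 <= 2 ^+ d :> R by rewrite exprn_ege1 ?ler1n.
  by rewrite exprS; nra.
set x := (eta * 2 ^+ d.+1)^-1.
have x_01 : 0 < x < 1 by rewrite invr_gt0 invf_lt1; nra.
have alpha_01 : 0 <= 1 - x < 1 by case/andP: x_01 => *; apply/andP; split; lra.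
have beta_ge : 2^-1 <= 1 - d%:R^-1 :> R.
  have : d%:R^-1 <= 2^-1 :> R by rewrite lef_pV2 ?posrE ?ler_nat ?ltr0n ?(ltnW d_gt1).
  lra.
have beta_gt0 : 0 < 1 - d%:R^-1 :> R by apply: lt_le_trans beta_ge; rewrite invr_gt0 ltr0n.
apply: treewidth_leW (treewidth_le_of_separators (adj_sym _) alpha_01 beta_gt0 c'_ge0
  (fun V _ => le_than_separators c_LT p_inj t_gt1 (lexx _) s_greedy V)).
have := div_one_sub_powR_le x_01 beta_ge c'_ge0.
have -> : 2 * c' / x = 2 * eta * (c * 8 ^+ d).
  by rewrite /x invrK -powR_half_mul_exp2 /c'; ring.
by move/(ler_wpM2r (powR_ge0 n%:R (1 - d%:R^-1))); lra.
Qed.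

Theorem lemma7 (R : realType) (d n : nat) (p : 'I_n -> 'rV[R]_d)
  (eta c : R) (s : seq ('I_n * 'I_n)) :
  (0 < d)%N ->
  injective p ->
  is_packing_constant d eta ->
  le_than_constant d eta c ->
  greedy_order p s ->
  treewidth_le (adj (greedy_spanner p (3 / 2) s))
    (15 * eta * c * 8 ^+ d * powR n%:R (1 - d%:R^-1)).
Proof.
move=> d_gt0 p_inj [eta_pack _] c_LT s_greedy.
have eta_ge1 := packing_bound_ge1 eta_pack.
have t_gt1 : 1 < 3 / 2 :> R by lra.
have c8_ge : 2 ^+ d.+1 <= c * 8 ^+ d.
  rewrite -powR_half_mul_exp2 mulrA ler_peMl ?exprn_ge0 //.
  exact: le_than_constant_ge1 (lt_le_trans ltr01 eta_ge1) c_LT t_gt1 (lexx _).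
have [d1 | d_neq1] := eqVneq d 1%N.
  subst d; apply: treewidth_leW (greedy_line_treewidth (ltW t_gt1) s_greedy p_inj).
  by move: c8_ge; rewrite invr1 subrr powRr0 mulr1 !exprS expr0; nra.
have d_gt1 : (1 < d)%N by rewrite ltn_neqAle eq_sym d_neq1.
apply: treewidth_leW (greedy_spanner_treewidth_le d_gt1 p_inj eta_ge1 c_LT s_greedy).
have c8_ge0 : 0 <= c * 8 ^+ d by apply: le_trans c8_ge; rewrite exprn_ge0.
have : 0 <= eta * (c * 8 ^+ d) * powR n%:R (1 - d%:R^-1).
  by apply: mulr_ge0 (powR_ge0 _ _); apply: mulr_ge0 c8_ge0; lra.
lra.
Qed.
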